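(* Let $D=\mathrm{diag}(1,-1,1,-1,\ldots)=(1,-x)$, $\mathbb{F}^{\rm S}=(1,x(1+x))$, $\mathbb{L}^{\rm S}=(1+2x,x(1+x))$, write $D(\mathbb{F}^{\rm S})^{-1}D=[r_{nj}]_{n,j\ge0}$ and $D(\mathbb{L}^{\rm S})^{-1}D=[q_{nj}]_{n,j\ge0}$, let $C_m=\frac{1}{m+1}\binom{2m}{m}$ be the Catalan numbers, and use the convention $\binom{a}{-1}=0$. Then: (a) The $0$-th column of $D(\mathbb{F}^{\rm S})^{-1}D$ is $[C_0,0,0,\ldots]^T$; and for $j\ge1$, $$r_{nj}=\begin{cases}\displaystyle\sum_{k=0}^{\lfloor (j-1)/2\rfloor}(-1)^k\binom{j-1-k}{k}C_{n-1-k}, & n\ge j,\\ 0,&\text{otherwise},\end{cases}$$ i.e. $r_{nj}=\binom{j-1}{0}C_{n-1}-\binom{j-2}{1}C_{n-2}+\cdots+(-1)^{\lfloor (j-1)/2\rfloor}\binom{\lceil (j-1)/2\rceil}{\lfloor (j-1)/2\rfloor}C_{n-\lceil j/2\rceil}$ for $n\ge j$. (b) The $0$-th column of $D(\mathbb{L}^{\rm S})^{-1}D$ is $[C_0,2C_1,3C_2,\ldots]^T$ (i.e. $q_{n0}=(n+1)C_n$); for $n\ge1$, $q_{n1}=(2n-1)C_{n-1}$; and for $j\ge2$ and $n\ge j$, $$q_{nj}=\sum_{k=0}^{\lfloor (j-1)/2\rfloor}(-1)^k\left[(n-1-k)\left(\binom{j-1-k}{k}+\binom{j-2-k}{k-1}\right)+\binom{j-2-k}{k-1}\right]C_{n-1-k},$$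 i.e. $q_{nj}=(n-1)C_{n-1}-\left[(n-2)\left(\binom{j-2}{1}+\binom{j-3}{0}\right)+\binom{j-3}{0}\right]C_{n-2}+\left[(n-3)\left(\binom{j-3}{2}+\binom{j-4}{1}\right)+\binom{j-4}{1}\right]C_{n-3}+\cdots+(-1)^{\lfloor (j-1)/2\rfloor}\left[\left(n-\lceil j/2\rceil\right)\left(\binom{\lceil (j-1)/2\rceil}{\lfloor (j-1)/2\rfloor}+\binom{\lceil (j-1)/2\rceil-1}{\lfloor (j-1)/2\rfloor-1}\right)+\binom{\lceil (j-3)/2\rceil}{\lfloor (j-3)/2\rfloor}\right]C_{n-\lceil j/2\rceil}$.
   Context: All matrices are infinite with rows and columns indexed by $0,1,2,\ldots$. For formal power series $g(x)=g_0+g_1x+\cdots$ with $g_0\ne0$ and $f(x)=f_1x+f_2x^2+\cdots$ with $f_1\ne0$, $(g(x),f(x))$ denotes the (Riordan) infinite lower triangular matrix whose $j$-th column has generating function $g(x)f(x)^j$. These matrices form a group under matrix multiplication with $(g,f)(h,l)=(g\cdot h(f),l(f))$. *)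

From mathcomp Require Import all_boot all_order all_algebra.
Set Implicit Arguments. Unset Strict Implicit. Unset Printing Implicit Defensive.
Import Order.TTheory GRing.Theory Num.Theory.
Local Open Scope ring_scope.

Definition imat := nat -> nat -> int.

Definition lower_tri (A : imat) : Prop := forall n j, (n < j)%N -> A n j = 0.

(* Product of infinite matrices; exact (finite sum) when A is lower triangular,
   since then A n k = 0 for k > n. *)
Definition imat_mul (A B : imat) : imat :=
  fun n j => \sum_(k < n.+1) A n k * B k j.

Definition imat_id : imat := fun n j => (n == j)%:R.

(* The Riordan array (g(x), f(x)): column j has generating function g f^j.
   Here g, f are polynomials (all series in the statement are polynomials). *)
Definition riordan (g f : {poly int}) : imat :=
  fun n j => (g * f ^+ j)`_n.

Definition D_mat : imat := riordan 1 (- 'X).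
Definition FS : imat := riordan 1 ('X * (1 + 'X)).
Definition LS : imat := riordan (1 + 2%:R *: 'X) ('X * (1 + 'X)).

Definition catalan (m : nat) : int := ('C(m.*2, m) %/ m.+1)%:Z.

(* binom(a, k-1) with the convention binom(a, -1) = 0. *)
Definition binom_pred (a k : nat) : nat :=
  if k is k'.+1 then 'C(a, k') else 0%N.

From mathcomp Require Import all_boot all_order all_algebra.
From mathcomp Require Import zify ring.
Set Implicit Arguments. Unset Strict Implicit. Unset Printing Implicit Defensive.
Import Order.TTheory GRing.Theory Num.Theory.
Local Open Scope ring_scope.

(* Conjugating by D turns the inverse of a Riordan array (g, x(1+x)) with
   g = 1 + a x into a lower triangular matrix A with
     A(n+1, j+1) = A(n, j) + A(n+1, j+2),   A(n, 0) = [n = 0] + a A(n, 1),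
   and these conditions determine A.  They are solved by binom(2n-j, n) for
   a = 2 and by binom(2n-j, n) - 2 binom(2n-j-1, n) for a = 0, i.e.
   D L^-1 D = (1/sqrt(1-4x), x c(x)) and D F^-1 D = (1, x c(x)).  Read along a
   row, the recurrence says A(n, j+1) = A(n, j) - A(n-1, j-1); Pascal's rule on
   the binomial weights shows that the alternating Catalan sums of the statement
   satisfy it as well, so they agree with A once two initial columns do. *)

Lemma sum_ord_delta N (j : nat) (F : nat -> int) :
  \sum_(k < N) F k * (k == j :> nat)%:R = if (j < N)%N then F j else 0.
Proof.
rewrite (eq_bigr (fun k : 'I_N => if k == j :> nat then F k else 0)) => [|k _].
  by rewrite -big_mkcond; apply: big_ord1_eq.
by rewrite mulr_natr mulrb.
Qed.

Lemma sum_ord_widen0 a b (F : nat -> int) : (a <= b)%N ->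
  (forall k, (a <= k < b)%N -> F k = 0) ->
  \sum_(k < b) F k = \sum_(k < a) F k.
Proof.
move=> le_ab F0; rewrite (big_ord_widen _ F le_ab) [RHS]big_mkcond /=.
by apply: eq_bigr => k _; case: ltnP => // le_ak; rewrite F0 // le_ak ltn_ord.
Qed.

Lemma imat_mul1l A n j : imat_mul imat_id A n j = A n j.
Proof.
rewrite /imat_mul (eq_bigr (fun k : 'I_n.+1 => A k j * (k == n :> nat)%:R)).
  by rewrite (sum_ord_delta _ _ (fun k => A k j)) ltnSn.
by move=> k _; rewrite mulrC eq_sym.
Qed.

Lemma imat_mul1r A n j : lower_tri A -> imat_mul A imat_id n j = A n j.
Proof.
move=> lA; rewrite /imat_mul /imat_id (sum_ord_delta _ _ (A n)) ltnS.
by case: leqP => // /lA ->.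
Qed.

Lemma imat_mulA A B C n j : lower_tri B ->
  imat_mul A (imat_mul B C) n j = imat_mul (imat_mul A B) C n j.
Proof.
move=> lB; rewrite /imat_mul.
under eq_bigr => k _ do rewrite mulr_sumr.
under [RHS]eq_bigr => l _ do rewrite mulr_suml.
rewrite exchange_big /=; apply: eq_bigr => k _.
rewrite [RHS](sum_ord_widen0 (F := fun l => A n k * B k l * C l j) (ltn_ord k)).
  by apply: eq_bigr => l _; rewrite mulrA.
by move=> l /andP[lt_kl _]; rewrite lB // mulr0 mul0r.
Qed.

Lemma eq_imat_mul_r A B1 B2 n j : (forall k, B1 k j = B2 k j) ->
  imat_mul A B1 n j = imat_mul A B2 n j.
Proof. by move=> eB; apply: eq_bigr => k _; rewrite eB. Qed.

Lemma eq_imat_mul_l A1 A2 B n j : (forall k, A1 n k = A2 n k) ->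
  imat_mul A1 B n j = imat_mul A2 B n j.
Proof. by move=> eA; apply: eq_bigr => k _; rewrite eA. Qed.

Lemma inverse_intertwine (M Mi Z T : imat) :
  lower_tri M -> lower_tri Z -> lower_tri T ->
  imat_mul Mi M = imat_id -> imat_mul M Mi = imat_id ->
  (forall n j, imat_mul M Z n j = imat_mul T M n j) ->
  forall n j, imat_mul Z Mi n j = imat_mul Mi T n j.
Proof.
move=> lM lZ lT MiM MMi MZ n j.
have MZMi k : imat_mul M (imat_mul Z Mi) k j = T k j.
  rewrite imat_mulA // (eq_imat_mul_l _ _ (MZ k)) -imat_mulA //.
  by rewrite MMi imat_mul1r.
rewrite -(imat_mul1l (imat_mul Z Mi)) -MiM -imat_mulA //.
exact: eq_imat_mul_r.
Qed.

Definition toeplitz (p : {poly int}) : imat := fun n j => p`_(n - j) *+ (j <= n).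

Lemma lower_tri_toeplitz p : lower_tri (toeplitz p).
Proof. by move=> n j lt_nj; rewrite /toeplitz leqNgt lt_nj. Qed.

Lemma toeplitzX n j : toeplitz 'X n j = (n == j.+1)%:R.
Proof.
rewrite /toeplitz coefX; case: (ltnP n j) => [lt_nj|le_jn].
  by rewrite mulr0n (ltn_eqF (ltn_trans lt_nj (ltnSn j))).
have [d ->] : exists d, n = (j + d)%N by exists (n - j)%N; rewrite subnKC.
by rewrite addKn ?leq_addr mulr1n -addn1 eqn_add2l.
Qed.

Lemma toeplitz_X1X n j :
  toeplitz ('X * (1 + 'X)) n j = (n == j.+1)%:R + (n == j.+2)%:R.
Proof.
rewrite /toeplitz coefXM coefD coef1 coefX; case: (ltnP n j) => [lt_nj|le_jn].
  by rewrite mulr0n (ltn_eqF (ltn_trans lt_nj (ltnSn j)))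
     (ltn_eqF (ltn_trans lt_nj (leqW (ltnSn j)))).
have [d ->] : exists d, n = (j + d)%N by exists (n - j)%N; rewrite subnKC.
rewrite addKn ?leq_addr mulr1n -addn2 -addn1 !eqn_add2l.
by case: d => [|[|[|d]]].
Qed.

Lemma mul_toeplitzX_l A n j : imat_mul (toeplitz 'X) A n.+1 j = A n j.
Proof.
rewrite /imat_mul (eq_bigr (fun k : 'I_n.+2 => A k j * (k == n :> nat)%:R)).
  by rewrite (sum_ord_delta _ _ (fun k => A k j)) ltnW.
by move=> k _; rewrite toeplitzX mulrC eqSS eq_sym.
Qed.

Lemma mul_toeplitz_X1X_r A n j : lower_tri A ->
  imat_mul A (toeplitz ('X * (1 + 'X))) n j = A n j.+1 + A n j.+2.
Proof.
move=> lA; rewrite /imat_mul.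
under eq_bigr => k _ do rewrite toeplitz_X1X mulrDr.
rewrite big_split /= !(sum_ord_delta _ _ (A n)) !ltnS.
by case: (leqP j.+1 n) => [_|/lA ->]; case: (leqP j.+2 n) => [_|/lA ->];
  rewrite ?addr0 ?add0r.
Qed.

Lemma riordan_lower g h : lower_tri (riordan g ('X * h)).
Proof. by move=> n j lt_nj; rewrite /riordan exprMn mulrCA coefXnM lt_nj. Qed.

(* Column j+1 of (g, f) is f times column j. *)
Lemma riordan_toeplitz g h n j :
  imat_mul (riordan g ('X * h)) (toeplitz 'X) n j =
  imat_mul (toeplitz ('X * h)) (riordan g ('X * h)) n j.
Proof.
set M := riordan g _.
have -> : imat_mul M (toeplitz 'X) n j = M n j.+1.
  rewrite /imat_mul (eq_bigr (fun k : 'I_n.+1 => M n k * (k == j.+1 :> nat)%:R)).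
    by rewrite sum_ord_delta /M; case: ltnP => // /riordan_lower ->.
  by move=> k _; rewrite toeplitzX.
rewrite /M /riordan exprS mulrCA coefMr.
by apply: eq_bigr => k _; rewrite /toeplitz -ltnS ltn_ord mulr1n.
Qed.

Definition sign_conj (A : imat) : imat := fun n j => (-1) ^+ (n + j) * A n j.

Lemma D_mat_entry n j : D_mat n j = (-1) ^+ j * (n == j)%:R.
Proof.
rewrite /D_mat /riordan mul1r [in LHS]exprNn.
by rewrite -(rmorph_sign (@polyC int)) coefCM coefXn.
Qed.

Lemma mul_D_mat_l A n j : imat_mul D_mat A n j = (-1) ^+ n * A n j.
Proof.
rewrite /imat_mul (eq_bigr (fun i : 'I_n.+1 => (-1) ^+ i * A i j * (i == n :> nat)%:R)).
  by rewrite (sum_ord_delta _ _ (fun i => (-1) ^+ i * A i j)) ltnSn.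
by move=> i _; rewrite D_mat_entry eq_sym mulrAC mulrC.
Qed.

Lemma mul_D_mat_r A n j : lower_tri A -> imat_mul A D_mat n j = A n j * (-1) ^+ j.
Proof.
move=> lA; rewrite /imat_mul.
under eq_bigr => i _ do rewrite D_mat_entry mulrA.
rewrite (sum_ord_delta _ _ (fun i => A n i * (-1) ^+ j)) ltnS.
by case: leqP => // /lA ->; rewrite mul0r.
Qed.

Lemma D_mat_conj A n j : lower_tri A ->
  imat_mul (imat_mul D_mat A) D_mat n j = sign_conj A n j.
Proof.
move=> lA; rewrite mul_D_mat_r ?mul_D_mat_l => [|m i /lA Ami].
  by rewrite /sign_conj exprD mulrAC.
by rewrite mul_D_mat_l Ami mulr0.
Qed.

Lemma inverse_riordan_col0 (a : int) f Mi n : lower_tri Mi ->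
  imat_mul Mi (riordan (1 + a *: 'X) f) = imat_id ->
  Mi n 0%N + a * Mi n 1%N = (n == 0%N)%:R.
Proof.
move=> lMi /(congr1 (fun A => A n 0%N)); rewrite /imat_mul /imat_id => <-.
under eq_bigr => k _ do
  rewrite /riordan expr0 mulr1 coefD coef1 coefZ coefX mulrDr mulrCA mulrA.
rewrite big_split /= sum_ord_delta (sum_ord_delta _ _ (fun k => a * Mi n k)).
by case: n => [|n] //=; rewrite (lMi 0%N 1%N) // mulr0 addr0.
Qed.

Definition ballot_tri (a : int) (A : imat) : Prop :=
  [/\ lower_tri A,
      forall n j, A n.+1 j.+1 = A n j + A n.+1 j.+2 &
      forall n, A n 0%N = (n == 0%N)%:R + a * A n 1%N].

Lemma ballot_tri_unique a A B : ballot_tri a A -> ballot_tri a B ->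
  forall n j, A n j = B n j.
Proof.
case=> lA rA cA [lB rB cB]; elim=> [|n IH] j.
  by case: j => [|j]; rewrite ?cA ?cB lA ?lB.
have row d i : (n.+2 <= i + d)%N -> A n.+1 i = B n.+1 i.
  elim: d i => [|d IHd] [|i] le_ni; rewrite ?cA ?cB.
  - by rewrite !addn0 in le_ni.
  - by rewrite lA ?lB //; rewrite addn0 in le_ni.
  - by rewrite (IHd 1%N) //; rewrite add0n in le_ni; rewrite add1n.
  by rewrite rA rB IH (IHd i.+2) // addSnnS.
exact: (row n.+2 j (leq_addl _ _)).
Qed.

Lemma inverse_riordan_ballot (a : int) (Mi : imat) :
  let M := riordan (1 + a *: 'X) ('X * (1 + 'X)) in
  lower_tri Mi -> imat_mul Mi M = imat_id -> imat_mul M Mi = imat_id ->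
  ballot_tri a (sign_conj Mi).
Proof.
move=> M lMi MiM MMi.
have shift n j : Mi n j = Mi n.+1 j.+1 + Mi n.+1 j.+2.
  have := inverse_intertwine (riordan_lower _ _) (lower_tri_toeplitz 'X)
    (lower_tri_toeplitz _) MiM MMi (riordan_toeplitz _ _) n.+1 j.
  by rewrite mul_toeplitzX_l mul_toeplitz_X1X_r.
split=> [n j /lMi Mi0|n j|n]; rewrite /sign_conj.
- by rewrite Mi0 mulr0.
- by rewrite (shift n j) !addSn !addnS !exprS; ring.
have col0 := inverse_riordan_col0 n lMi MiM.
have -> : Mi n 0%N = (n == 0%N)%:R - a * Mi n 1%N by rewrite -col0 addrK.
by rewrite addn0 addn1 exprS; case: n {col0} => [|n] /=; rewrite ?expr0; ring.
Qed.

Lemma catalan_mul m : (m.+1)%:R * catalan m = ('C(m.*2, m))%:R.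
Proof.
have bin_succ : (m.+1 * 'C(m.*2, m.+1) = m * 'C(m.*2, m))%N.
  by rewrite mul_bin_left -addnn addnK.
have dvd_bin : (m.+1 %| 'C(m.*2, m))%N.
  apply/dvdnP; exists ('C(m.*2, m) - 'C(m.*2, m.+1))%N.
  rewrite mulnBl [X in (_ - X)%N]mulnC bin_succ [(m * _)%N]mulnC -mulnBr.
  by rewrite subSnn muln1.
by rewrite /catalan -natz -natrM mulnC divnK.
Qed.

Lemma ballot_tri_col a A : ballot_tri a A ->
  forall n j, A n.+1 j.+2 = A n.+1 j.+1 - A n j.
Proof. by case=> _ rA _ n j; rewrite (rA n j) addrAC subrr add0r. Qed.

Definition Qmat : imat := fun n j => if (j <= n)%N then ('C(n.*2 - j, n))%:R else 0.

Lemma central_bin_half n : 'C(n.+1.*2, n.+1) = ('C(n.*2.+1, n.+1) * 2)%N.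
Proof.
apply/eqP; rewrite -(eqn_pmul2l (ltn0Sn n)).
have := mul_bin_down n.+1.*2 n.+1.
rewrite doubleS /= (_ : (n.*2.+2 - n.+1 = n.+1)%N); last by lia.
by move=> <-; apply/eqP; lia.
Qed.

Lemma Qmat_ballot : ballot_tri 2 Qmat.
Proof.
split=> [n j lt_nj|n j|[|n]]; rewrite /Qmat.
- by rewrite leqNgt lt_nj.
- rewrite !ltnS; case: (leqP j n) => [le_jn|lt_nj]; last first.
    by rewrite leqNgt ltnW // ltnNge ltnW // ltnW.
  have le_j2n : (j <= n.*2)%N by lia.
  rewrite doubleS !subSS subSn // binS natrD addrC; case: ltnP => // le_nj.
  by rewrite (@bin_small _ n.+1) ?add0r //; lia.
- by [].
- by rewrite /= subn0 subn1 doubleS /= central_bin_half natrM add0r mulrC.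
Qed.

Lemma Qmat_col0 n : Qmat n 0%N = (n.+1)%:R * catalan n.
Proof. by rewrite /Qmat subn0 catalan_mul. Qed.

Lemma Qmat_col1 m : Qmat m.+1 1%N = ((2 * m).+1)%:R * catalan m.
Proof.
have m1_neq0 : (m.+1)%:R != 0 :> int by rewrite pnatr_eq0.
apply: (mulfI m1_neq0).
rewrite mulrCA catalan_mul -!natrM /Qmat doubleS subSS subn0 -mul_bin_diag.
by rewrite mul2n.
Qed.

Lemma Qmat_col2 m : Qmat m.+1 2%N = m%:R * catalan m.
Proof.
rewrite (ballot_tri_col Qmat_ballot) Qmat_col1 Qmat_col0 -addn1 natrD natrM.
ring.
Qed.

Lemma Qmat_col3 p :
  Qmat p.+2 3%N = (p.+1)%:R * catalan p.+1 - ((2 * p).+1)%:R * catalan p.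
Proof. by rewrite (ballot_tri_col Qmat_ballot) Qmat_col2 Qmat_col1. Qed.

Lemma Qmat_col4 p : Qmat p.+2 4%N =
  (p.+1)%:R * catalan p.+1 - ((2 * p).+1)%:R * catalan p - p%:R * catalan p.
Proof. by rewrite (ballot_tri_col Qmat_ballot) Qmat_col3 Qmat_col2. Qed.

Definition Rmat : imat := fun n j => Qmat n j - 2 * Qmat n j.+1.

Lemma Rmat_ballot : ballot_tri 0 Rmat.
Proof.
case: Qmat_ballot => lQ rQ cQ; split=> [n j lt_nj|n j|n]; rewrite /Rmat.
- by rewrite !lQ ?mulr0 ?subr0 // ltnW.
- by rewrite (rQ n j) (rQ n j.+1); ring.
- by rewrite cQ mul0r addrK addr0.
Qed.

Lemma Rmat_col1 m : Rmat m.+1 1%N = catalan m.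
Proof. rewrite /Rmat Qmat_col1 Qmat_col2 -addn1 natrD natrM; ring. Qed.

Lemma Rmat_col2 m : (0 < m)%N -> Rmat m.+1 2%N = catalan m.
Proof.
case: m => // m _; case: Rmat_ballot => _ _ cR.
by rewrite (ballot_tri_col Rmat_ballot) Rmat_col1 cR mul0r addr0 /=.
Qed.

Definition alt_sum (w : nat -> nat -> nat -> int) (N n j : nat) : int :=
  \sum_(k < N) (-1) ^+ k * w n j k * catalan (n - 1 - k).

Lemma alt_sum_widen w n j : (0 < j)%N ->
  (forall k, ((j - 1)./2 < k < j)%N -> w n j k = 0) ->
  alt_sum w j n j = alt_sum w (j - 1)./2.+1 n j.
Proof.
move=> j_gt0 w0.
apply: (sum_ord_widen0 (F := fun k => (-1) ^+ k * w n j k * catalan (n - 1 - k))).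
  by rewrite ltn_half_double; lia.
by move=> k /w0 ->; rewrite mulr0 mul0r.
Qed.

Lemma alt_sum_extend w N n j : w n j N = 0 -> alt_sum w N.+1 n j = alt_sum w N n j.
Proof. by move=> wN; rewrite /alt_sum big_ord_recr /= wN mulr0 mul0r addr0. Qed.

Lemma alt_sum_rec w n j :
  w n.+1 j.+2 0%N = w n.+1 j.+1 0%N ->
  (forall k, w n.+1 j.+2 k.+1 = w n.+1 j.+1 k.+1 + w n j k) ->
  w n.+1 j.+1 j.+1 = 0 -> w n j j = 0 ->
  alt_sum w j.+2 n.+1 j.+2 = alt_sum w j.+1 n.+1 j.+1 - alt_sum w j n j.
Proof.
move=> w0 wS wj1 wj; rewrite -(alt_sum_extend wj1) -(alt_sum_extend wj) /alt_sum.
rewrite big_ord_recl [in X in _ = X - _]big_ord_recl w0 -addrA -sumrB.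
congr (_ + _); apply: eq_bigr => k _.
rewrite /= wS (_ : (n.+1 - 1 - k.+1 = n - 1 - k)%N); last by lia.
by rewrite exprS; ring.
Qed.

Lemma eq_two_columns (f g : nat -> nat -> int) j0 :
  (forall n, (j0 <= n)%N -> f n j0 = g n j0) ->
  (forall n, (j0 < n)%N -> f n j0.+1 = g n j0.+1) ->
  (forall n j, (j0 <= j)%N -> (j < n)%N -> f n.+1 j.+2 = f n.+1 j.+1 - f n j) ->
  (forall n j, (j0 <= j)%N -> (j < n)%N -> g n.+1 j.+2 = g n.+1 j.+1 - g n j) ->
  forall n j, (j0 <= j <= n)%N -> f n j = g n j.
Proof.
move=> fg0 fg1 rf rg.
suff fg i : (forall n, (j0 + i <= n)%N -> f n (j0 + i)%N = g n (j0 + i)%N) /\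
            (forall n, (j0 + i < n)%N -> f n (j0 + i).+1 = g n (j0 + i).+1).
  by move=> n j /andP[le_j0j le_jn]; rewrite -(subnKC le_j0j); apply: (fg _).1; lia.
elim: i => [|i [IH0 IH1]]; first by rewrite !addn0; split.
rewrite addnS; split=> // -[|n] lt_n; first by lia.
by rewrite rf ?rg ?IH1 ?IH0 //; lia.
Qed.

Definition r_weight (n j k : nat) : int := ('C(j - 1 - k, k))%:R.

Definition q_weight (n j k : nat) : int :=
  ((n - 1 - k)%N)%:R * (('C(j - 1 - k, k))%:R + (binom_pred (j - 2 - k) k)%:R)
  + (binom_pred (j - 2 - k) k)%:R.

Lemma binS_subn i k : 'C(i.+1 - k, k.+1) = ('C(i - k, k.+1) + 'C(i - k, k))%N.
Proof.
case: (leqP k i) => [le_ki|lt_ik]; first by rewrite subSn // binS.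
have /eqP-> : (i.+1 - k == 0)%N by rewrite subn_eq0.
have /eqP-> : (i - k == 0)%N by rewrite subn_eq0 ltnW.
by case: k lt_ik.
Qed.

Lemma r_weight_vanish n j k : ((j - 1)./2 < k)%N -> r_weight n j k = 0.
Proof. by rewrite ltn_half_double => lt_jk; rewrite /r_weight bin_small //; lia. Qed.

(* The bound [3 <= j] is needed: for j = 2 and k = 1 the truncated j - 2 - k is 0
   and binom_pred 0 1 = 1. *)
Lemma q_weight_vanish n j k : (3 <= j)%N -> ((j - 1)./2 < k)%N -> q_weight n j k = 0.
Proof.
rewrite ltn_half_double => le3j lt_jk; case: k lt_jk => [|k] lt_jk; first by lia.
by rewrite /q_weight /= !bin_small ?mulr0 ?addr0 //; lia.
Qed.

Lemma r_weight_rec n j k : (0 < j)%N ->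
  r_weight n.+1 j.+2 k.+1 = r_weight n.+1 j.+1 k.+1 + r_weight n j k.
Proof. by case: j => // i _; rewrite /r_weight !subn1 /= !subSS -natrD binS_subn. Qed.

Lemma q_weight_rec n j k : (3 <= j)%N ->
  q_weight n.+1 j.+2 k.+1 = q_weight n.+1 j.+1 k.+1 + q_weight n j k.
Proof.
case: j => [|[|[|i]]] // _; rewrite /q_weight !subn1 !subn2 /= !subSS.
have -> : (n.-1 - k = n - k.+1)%N by lia.
have pascal_pred : 'C(i.+2 - k, k) = ('C(i.+1 - k, k) + binom_pred (i.+1 - k) k)%N.
  by case: k => [|k]; rewrite ?bin0 //= !subSS binS_subn.
rewrite -/(binom_pred (i.+1 - k) k) (binS_subn i.+2 k) pascal_pred !natrD; ring.
Qed.

Definition r_sum (n j : nat) : int := alt_sum r_weight (j - 1)./2.+1 n j.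

Definition q_sum (n j : nat) : int := alt_sum q_weight (j - 1)./2.+1 n j.

Lemma r_sum_rec n j : (0 < j)%N -> r_sum n.+1 j.+2 = r_sum n.+1 j.+1 - r_sum n j.
Proof.
move=> j_gt0; rewrite /r_sum -!alt_sum_widen //; last 3 first.
  1-3: by move=> k /andP[/r_weight_vanish].
apply: alt_sum_rec => [|k||]; first by rewrite /r_weight !bin0.
- exact: r_weight_rec.
all: by apply: r_weight_vanish; rewrite ltn_half_double; lia.
Qed.

Lemma q_sum_rec n j : (3 <= j)%N -> q_sum n.+1 j.+2 = q_sum n.+1 j.+1 - q_sum n j.
Proof.
move=> le3j; have j_gt0 : (0 < j)%N by apply: leq_trans le3j.
rewrite /q_sum -!alt_sum_widen //; last 3 first.
  1-3: by move=> k /andP[lt_k _]; apply: (q_weight_vanish _ _ lt_k); lia.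
apply: alt_sum_rec => [|k||]; first by rewrite /q_weight /= !bin0.
- exact: q_weight_rec.
- by apply: (q_weight_vanish n.+1); rewrite ?ltn_half_double; lia.
- by apply: (q_weight_vanish n); rewrite ?ltn_half_double; lia.
Qed.

Lemma Rmat_closed n j : (0 < j <= n)%N -> Rmat n j = r_sum n j.
Proof.
move: n j; apply: eq_two_columns => [[|m] // _|[|[|m]] // lt1m|m i _ _|m i le1i _].
- by rewrite Rmat_col1 /r_sum /alt_sum big_ord1 /r_weight /= bin0 mul1r subn0 subn1.
- by rewrite Rmat_col2 // /r_sum /alt_sum big_ord1 /r_weight /= bin0 mul1r subn0 subn1.
- exact: (ballot_tri_col Rmat_ballot).
exact: r_sum_rec.
Qed.

(* The column recurrence of [q_sum] only holds from column 3 on, so the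
   induction starts from columns 3 and 4 and column 2 is checked directly. *)
Lemma Qmat_closed n j : (2 <= j <= n)%N -> Qmat n j = q_sum n j.
Proof.
case/andP; rewrite leq_eqVlt => /predU1P[<- {j}|lt2j le_jn].
  case: n => [|[|m]] // _.
  by rewrite Qmat_col2 /q_sum /alt_sum big_ord1 /q_weight /= !subnS !subn0 /= bin0; ring.
apply: (eq_two_columns (f := Qmat) (g := q_sum) (j0 := 3))
  => [[|[|p]] // _|[|[|p]] // _|m i _ _|m i le3i _|].
- rewrite Qmat_col3 /q_sum /alt_sum big_ord_recr big_ord1 /q_weight /= !subnS !subn0 /=.
  by rewrite !bin0 bin1 -[((2 * p).+1)%:R]natr1 natrM; ring.
- rewrite Qmat_col4 /q_sum /alt_sum big_ord_recr big_ord1 /q_weight /= !subnS !subn0 /=.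
  by rewrite !bin0 bin1 -[((2 * p).+1)%:R]natr1 natrM; ring.
- exact: (ballot_tri_col Qmat_ballot).
- exact: q_sum_rec.
by rewrite lt2j le_jn.
Qed.

Theorem theorem3p5 (Finv Linv : imat) :
  lower_tri Finv -> imat_mul Finv FS = imat_id -> imat_mul FS Finv = imat_id ->
  lower_tri Linv -> imat_mul Linv LS = imat_id -> imat_mul LS Linv = imat_id ->
  let r := imat_mul (imat_mul D_mat Finv) D_mat in
  let q := imat_mul (imat_mul D_mat Linv) D_mat in
  ((forall n, r n 0%N = catalan 0 * (n == 0%N)%:R) /\
   (forall n j, (1 <= j)%N ->
      r n j = if (j <= n)%N then
                \sum_(k < (j - 1)./2.+1)
                   (-1) ^+ k * ('C(j - 1 - k, k))%:R * catalan (n - 1 - k)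
              else 0)) /\
  ((forall n, q n 0%N = (n.+1)%:R * catalan n) /\
   (forall n, (1 <= n)%N -> q n 1%N = ((2 * n - 1)%N)%:R * catalan (n - 1)) /\
   (forall n j, (2 <= j)%N -> (j <= n)%N ->
      q n j = \sum_(k < (j - 1)./2.+1)
                (-1) ^+ k *
                (((n - 1 - k)%N)%:R *
                   (('C(j - 1 - k, k))%:R + (binom_pred (j - 2 - k) k)%:R)
                 + (binom_pred (j - 2 - k) k)%:R)
                * catalan (n - 1 - k))).
Proof.
move=> lF FiF FFi lL LiL LLi r q.
have FS_riordan : FS = riordan (1 + 0 *: 'X) ('X * (1 + 'X)).
  by rewrite scale0r addr0.
have r_Rmat n j : r n j = Rmat n j.
  rewrite /r D_mat_conj //; apply: (ballot_tri_unique _ Rmat_ballot).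
  by apply: inverse_riordan_ballot; rewrite -?FS_riordan.
have q_Qmat n j : q n j = Qmat n j.
  rewrite /q D_mat_conj //; apply: (ballot_tri_unique _ Qmat_ballot).
  exact: inverse_riordan_ballot.
case: Rmat_ballot => lR _ cR.
split; [split | split; [|split]].
- by move=> n; rewrite r_Rmat cR mul0r addr0 mul1r.
- move=> n j le1j; rewrite r_Rmat; case: leqP => [le_jn|/lR //].
  by rewrite Rmat_closed ?le1j.
- by move=> n; rewrite q_Qmat Qmat_col0.
- by case=> [|m] // _; rewrite q_Qmat Qmat_col1 mulnS add2n !subn1.
- by move=> n j le2j le_jn; rewrite q_Qmat Qmat_closed ?le2j.
Qed.
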